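(* Let $pu$, $uv$, and $vq$ be three edges of a Euclidean minimum spanning tree of a finite point set in the plane such that $p$ and $q$ lie on the same side of the line through $u$ and $v$. Let $\alpha=\angle puv$ and $\gamma=\angle uvq$ denote the convex angles at $u$ and $v$, respectively. Then $\alpha+\gamma\geqslant 150^\circ$.
   Context: Angles are measured in degrees. *)

From HB Require Import structures.
From mathcomp Require Import all_boot all_order all_algebra.
From mathcomp Require Import all_classical all_reals all_analysis.
Set Implicit Arguments. Unset Strict Implicit. Unset Printing Implicit Defensive.
Import Order.TTheory GRing.Theory Num.Theory.
Local Open Scope ring_scope.

Section Geo.
Variable R : realType.
Definition pt := (R * R)%type.

Definition dot (a b : pt) : R := a.1 * b.1 + a.2 * b.2.
Definition vsub (a b : pt) : pt := (a.1 - b.1, a.2 - b.2).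
Definition dist (a b : pt) : R := Num.sqrt (dot (vsub a b) (vsub a b)).
Definition angle_rad (a b c : pt) : R :=
  acos (dot (vsub a b) (vsub c b) / (dist a b * dist c b)).
Definition angle_deg (a b c : pt) : R := angle_rad a b c * 180 / pi.
Definition cross (a b c : pt) : R :=
  (b.1 - a.1) * (c.2 - a.2) - (b.2 - a.2) * (c.1 - a.1).
Definition same_side (u v p q : pt) : Prop := 0 < cross u v p * cross u v q.
End Geo.

Section Graph.
Variable n : nat.
Definition simple_graph (T : rel 'I_n) : Prop :=
  (forall i j, T i j = T j i) /\ (forall i, ~~ T i i).
Definition remove_edge (T : rel 'I_n) (a b : 'I_n) : rel 'I_n :=
  fun x y => T x y && ~~ (((x == a) && (y == b)) || ((x == b) && (y == a))).
Definition connected_graph (T : rel 'I_n) : Prop := forall i j, connect T i j.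
(* acyclic: every edge is a bridge (no cycle contains it) *)
Definition acyclic (T : rel 'I_n) : Prop :=
  forall a b, T a b -> ~~ connect (remove_edge T a b) a b.
Definition spanning_tree (T : rel 'I_n) : Prop :=
  [/\ simple_graph T, connected_graph T & acyclic T].
End Graph.

Definition tree_length (R : realType) (n : nat) (P : 'I_n -> pt R)
  (T : rel 'I_n) : R :=
  \sum_(i : 'I_n) \sum_(j : 'I_n | (i < j)%N && T i j) dist (P i) (P j).

Definition EMST (R : realType) (n : nat) (P : 'I_n -> pt R) (T : rel 'I_n) : Prop :=
  spanning_tree T /\
  forall T' : rel 'I_n, spanning_tree T' -> tree_length P T <= tree_length P T'.

From HB Require Import structures.
From mathcomp Require Import all_boot all_order all_algebra.
From mathcomp Require Import all_classical all_reals all_analysis.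
From mathcomp Require Import ring lra.
Set Implicit Arguments. Unset Strict Implicit. Unset Printing Implicit Defensive.
Import Order.TTheory GRing.Theory Num.Theory.
Local Open Scope ring_scope.

(* Deleting an edge xy of a minimum spanning tree splits it into two components,
   and no pair of points joining the two components is closer than x and y:
   otherwise exchanging the two pairs would give a shorter spanning tree.  Along
   the path p u v q this makes pv the longest side of triangle puv and uq the
   longest side of triangle uvq, so alpha, gamma >= 60 degrees, and it makes pq
   at least as long as pu, uv and vq.  If alpha or gamma is at least 90 degrees
   we are done.  Otherwise, assuming |vq| <= |pu| by symmetry, the law of cosines
   for the quadrilateral puvq (with p and q on the same side of uv) turns
   |pq| >= |uv|, |pq| >= |pu| and |uq| >= |uv| into cos (alpha + 2 gamma) >= -1/2,
   hence alpha + 2 gamma >= 240 degrees and alpha + gamma >= 240 - 90 = 150. *)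

Lemma quadrilateral_cos_ineq (R : realFieldType) (d r s D A C W : R) :
  0 < d -> 0 < s -> s <= r -> 0 < C -> 1 / 2 <= W -> 2 * d * C <= s ->
  D = d ^+ 2 + r ^+ 2 + s ^+ 2 - 2 * d * r * A - 2 * d * s * C - 2 * r * s * W ->
  d ^+ 2 <= D -> r ^+ 2 <= D -> 4 * C * W + 2 * A <= 1.
Proof.
move=> d_gt0 s_gt0 sr C_gt0 W_ge dC DE dD rD.
have r_gt0 : 0 < r by lra.
have rsW_le : 2 * r * s * W <= r * d + s ^+ 2 - 2 * d * s * C - 2 * d * r * A.
  case: (lerP r d) => h.
    have : r ^+ 2 <= r * d by rewrite expr2 ler_pM2l.
    lra.
  have : d ^+ 2 <= r * d by rewrite expr2 ler_pM2r // ltW.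
  lra.
have s_le_r : s * (s - 2 * d * C) <= r * (s - 2 * d * C) by apply: ler_wpM2r; lra.
have sW_le : 2 * s * W <= d + s - 2 * d * C - 2 * d * A.
  rewrite -(ler_pM2l r_gt0); lra.
have W_bound : (2 * W - 1) * (2 * d * C) <= (2 * W - 1) * s by apply: ler_wpM2l; lra.
rewrite -(ler_pM2l d_gt0); lra.
Qed.

Section Trig.
Variable R : realType.

Lemma cos_pi3 : cos (pi / 3 : R) = 1 / 2.
Proof.
set c := cos (pi / 3 : R).
have c_gt0 : 0 < c by apply: cos_gt0_pihalf; have := @pi_gt0 R; lra.
have triple : cos ((pi / 3) *+ 2 + pi / 3 : R) = 4 * c ^+ 3 - 3 * c.
  rewrite cosD cos_mulr2n sin_mulr2n -/c !mulr2n.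
  have -> : (c * sin (pi / 3) + c * sin (pi / 3)) * sin (pi / 3)
            = 2 * c * sin (pi / 3) ^+ 2 by ring.
  rewrite sin2cos2 -/c; ring.
have thirds : (pi / 3) *+ 2 + pi / 3 = pi :> R by rewrite mulr2n; field.
rewrite thirds cospi in triple.
have : (c + 1) * (2 * c - 1) ^+ 2 = 0.
  have -> : (c + 1) * (2 * c - 1) ^+ 2 = 4 * c ^+ 3 - 3 * c + 1 by ring.
  by rewrite -triple addNr.
move/eqP; rewrite mulf_eq0 sqrf_eq0 => /orP[] /eqP; lra.
Qed.

Lemma ler_cos : {in `[0, pi] &, {mono (@cos R) : x y /~ y <= x}}.
Proof. by move=> x y xI yI; rewrite !leNgt ltr_cos. Qed.

Lemma cos_2pi3 : cos (2 * pi / 3 : R) = - (1 / 2).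
Proof.
have -> : 2 * pi / 3 = - (pi / 3) + pi :> R by field.
by rewrite cosDpi cosN cos_pi3.
Qed.

Lemma angle_sum_ge_5pi6 (d r s D a g : R) :
  0 < d -> 0 < r -> 0 < s -> pi / 3 <= a -> pi / 3 <= g ->
  2 * d * cos a <= r -> 2 * d * cos g <= s ->
  D ^+ 2 = d ^+ 2 + r ^+ 2 + s ^+ 2 - 2 * d * r * cos a - 2 * d * s * cos g
           + 2 * r * s * cos (a + g) ->
  d <= D -> r <= D -> s <= D -> 5 * pi / 6 <= a + g.
Proof.
wlog sr : r s a g / s <= r.
  move=> le_sr d_gt0 r_gt0 s_gt0 a3 g3 ar gs DE dD rD sD.
  have [sr|rs] := lerP s r; first exact: (le_sr r s a g).
  rewrite addrC.
  apply: (le_sr s r g a) => //; first exact: ltW.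
  by rewrite [g + a]addrC DE; ring.
move=> d_gt0 r_gt0 s_gt0 a3 g3 ar gs DE dD rD sD.
have pi_gt0 := @pi_gt0 R.
have [a2|a2] := lerP (pi / 2) a; first lra.
have [g2|g2] := lerP (pi / 2) g; first lra.
have cg_gt0 : 0 < cos g by apply: cos_gt0_pihalf; lra.
have cag : cos (a + g) <= - (1 / 2).
  by rewrite -cos_2pi3 ler_cos ?in_itv /=; lra.
have sq x : 0 <= x -> x <= D -> x ^+ 2 <= D ^+ 2.
  by move=> x0 xD; rewrite ler_pXn2r // ?nnegrE //; lra.
have W_ge : 1 / 2 <= - cos (a + g) by lra.
have D2E : D ^+ 2 = d ^+ 2 + r ^+ 2 + s ^+ 2 - 2 * d * r * cos a - 2 * d * s * cos g
                    - 2 * r * s * - cos (a + g) by rewrite DE; ring.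
have := quadrilateral_cos_ineq d_gt0 s_gt0 sr cg_gt0 W_ge gs D2E
  (sq d (ltW d_gt0) dD) (sq r (ltW r_gt0) rD).
(* The bound of [quadrilateral_cos_ineq] is exactly [cos (a + 2 g) >= -1/2]. *)
have -> : 4 * cos g * - cos (a + g) + 2 * cos a = - 2 * cos (a + g + g).
  have -> : cos a = cos (a + g - g) by rewrite addrK.
  rewrite (cosD (a + g) g) (cosB (a + g) g); ring.
rewrite -[a + g + g](subrK pi) cosDpi => ineq.
have : pi / 3 <= a + g + g - pi by rewrite -ler_cos ?in_itv /= ?cos_pi3; lra.
lra.
Qed.
End Trig.

Section PlaneGeometry.
Variable R : realType.
Implicit Types a b c p q u v : pt R.

Lemma dist_ge0 a b : 0 <= dist a b.
Proof. exact: sqrtr_ge0. Qed.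

Lemma sqr_dist a b : dist a b ^+ 2 = (a.1 - b.1) ^+ 2 + (a.2 - b.2) ^+ 2.
Proof. by rewrite sqr_sqrtr /dot /= -!expr2 // addr_ge0 ?sqr_ge0. Qed.

Lemma dist_sym a b : dist a b = dist b a.
Proof. by rewrite /dist /dot /vsub /=; congr Num.sqrt; ring. Qed.

Lemma angle_radC a b c : angle_rad a b c = angle_rad c b a.
Proof. by rewrite /angle_rad [dist a b * _]mulrC /dot; congr (acos (_ / _)); ring. Qed.

Lemma sqr_dot_add_sqr_cross a b c :
  dot (vsub a b) (vsub c b) ^+ 2 + cross b a c ^+ 2 = (dist a b * dist c b) ^+ 2.
Proof. by rewrite exprMn !sqr_dist /dot /cross /vsub /=; ring. Qed.

Lemma cos_angle_rad_arg_itv a b c :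
  -1 <= dot (vsub a b) (vsub c b) / (dist a b * dist c b) <= 1.
Proof.
have := sqr_dot_add_sqr_cross a b c.
set m := dist a b * dist c b; set y := _ / m => L.
have [m0|m_neq0] := eqVneq m 0; first by rewrite /y m0 invr0 mulr0; lra.
rewrite -(divfK m_neq0 (dot _ _)) -/y in L.
have m2_gt0 : 0 < m ^+ 2 by rewrite exprn_even_gt0.
have : y ^+ 2 <= 1 by nra.
nra.
Qed.

Lemma angle_rad_itv a b c : 0 <= angle_rad a b c <= pi.
Proof. by rewrite acos_ge0 ?acos_lepi ?cos_angle_rad_arg_itv. Qed.

(* With the side lengths multiplied out, this and [sin_angle_rad] also hold for
   degenerate angles, where [angle_rad] is [acos 0] because of the division by 0. *)
Lemma cos_angle_rad a b c :
  cos (angle_rad a b c) * (dist a b * dist c b) = dot (vsub a b) (vsub c b).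
Proof.
rewrite /angle_rad acosK ?in_itv ?cos_angle_rad_arg_itv //.
have := sqr_dot_add_sqr_cross a b c; set m := _ * _ => L.
have [m0|m_neq0] := eqVneq m 0; last exact: divfK.
by rewrite m0 mulr0; apply/esym/eqP; rewrite -sqrf_eq0; apply/eqP; nra.
Qed.

Lemma sin_angle_rad a b c :
  sin (angle_rad a b c) * (dist a b * dist c b) = `|cross b a c|.
Proof.
rewrite /angle_rad sin_acos ?cos_angle_rad_arg_itv //.
have := sqr_dot_add_sqr_cross a b c.
set m := _ * _; set y := _ / m => L.
have /andP[y_ge y_le] : -1 <= y <= 1 by exact: cos_angle_rad_arg_itv.
have [m0|m_neq0] := eqVneq m 0.
  by rewrite m0 mulr0; apply/esym/eqP; rewrite normr_eq0 -sqrf_eq0; apply/eqP; nra.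
have m_ge0 : 0 <= m by rewrite mulr_ge0 ?dist_ge0.
rewrite -(divfK m_neq0 (dot _ _)) -/y in L.
rewrite -[in LHS](ger0_norm m_ge0) -sqrtr_sqr -sqrtrM; last by nra.
rewrite -sqrtr_sqr; congr Num.sqrt.
have -> : (1 - y ^+ 2) * m ^+ 2 = m ^+ 2 - (y * m) ^+ 2 by ring.
by rewrite -L; ring.
Qed.

Lemma sqr_dist_law_cos a b c :
  dist a c ^+ 2 = dist a b ^+ 2 + dist c b ^+ 2
                  - 2 * dist a b * dist c b * cos (angle_rad a b c).
Proof.
have -> : 2 * dist a b * dist c b * cos (angle_rad a b c)
          = 2 * (cos (angle_rad a b c) * (dist a b * dist c b)) by ring.
by rewrite cos_angle_rad !sqr_dist /dot /vsub /=; ring.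
Qed.

Lemma cos_angle_rad_le a b c : 0 < dist a b -> dist c b <= dist a c ->
  2 * dist c b * cos (angle_rad a b c) <= dist a b.
Proof.
move=> ab_gt0 cb_le.
have : dist c b ^+ 2 <= dist a c ^+ 2 by rewrite ler_pXn2r ?nnegrE ?dist_ge0.
rewrite (sqr_dist_law_cos a b c) => sq.
rewrite -(ler_pM2l ab_gt0); lra.
Qed.

Lemma angle_rad_ge_pi3 a b c : 0 < dist a b -> 0 < dist c b ->
  dist a b <= dist a c -> dist c b <= dist a c -> pi / 3 <= angle_rad a b c.
Proof.
move=> ab_gt0 cb_gt0 ab_le cb_le.
have ab_bound := cos_angle_rad_le ab_gt0 cb_le.
have cb_bound : 2 * dist a b * cos (angle_rad a b c) <= dist c b.
  by rewrite angle_radC; apply: cos_angle_rad_le; rewrite // [dist c a]dist_sym.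
have pi_gt0 := @pi_gt0 R.
rewrite -ler_cos ?in_itv /= ?angle_rad_itv ?cos_pi3 //; last by lra.
nra.
Qed.

Lemma dist_gt0_of_cross a b c :
  cross b a c != 0 -> 0 < dist a b /\ 0 < dist c b.
Proof.
have L := sqr_dot_add_sqr_cross a b c; move=> cross_neq0.
have : dist a b * dist c b != 0.
  apply: contra cross_neq0 => /eqP m0; rewrite -sqrf_eq0; apply/eqP.
  by move: L; rewrite m0; nra.
rewrite mulf_eq0 negb_or => /andP[ab_neq0 cb_neq0].
by rewrite !lt_def ab_neq0 cb_neq0 !dist_ge0.
Qed.

Lemma same_side_dist_gt0 u v p q : same_side u v p q ->
  [/\ 0 < dist u v, 0 < dist p u & 0 < dist q v].
Proof.
move=> side; have : cross u v p * cross u v q != 0 by rewrite gt_eqF.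
rewrite mulf_eq0 negb_or => /andP[p_off q_off].
have [pu_gt0 vu_gt0] : 0 < dist p u /\ 0 < dist v u.
  apply: dist_gt0_of_cross.
  have -> : cross u p v = - cross u v p by rewrite /cross; ring.
  by rewrite oppr_eq0.
have [qv_gt0 _] : 0 < dist q v /\ 0 < dist u v.
  apply: dist_gt0_of_cross.
  by have -> : cross v q u = cross u v q by rewrite /cross; ring.
by rewrite dist_sym.
Qed.

Lemma same_side_neq u v p q : same_side u v p q -> p != v /\ q != u.
Proof.
move=> side; split; apply: contraTneq side => ->; rewrite /same_side -leNgt.
- have -> : cross u v v = 0 by rewrite /cross; ring.
  by rewrite mul0r.
- have -> : cross u v u = 0 by rewrite /cross; ring.
  by rewrite mulr0.
Qed.

Lemma sqr_dist_same_side u v p q : same_side u v p q ->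
  dist p q ^+ 2 = dist u v ^+ 2 + dist p u ^+ 2 + dist q v ^+ 2
    - 2 * dist u v * dist p u * cos (angle_rad p u v)
    - 2 * dist u v * dist q v * cos (angle_rad u v q)
    + 2 * dist p u * dist q v * cos (angle_rad p u v + angle_rad u v q).
Proof.
move=> side; have [d_gt0 _ _] := same_side_dist_gt0 side.
(* [same_side] equates the product of the unsigned sines with the signed product
   of cross products. *)
have sines : `|cross u p v| * `|cross v u q| = cross u v p * cross u v q.
  rewrite -normrM gtr0_norm; last by move: side; rewrite /same_side /cross; nra.
  by rewrite /cross; ring.
apply: (mulfI (x := dist u v ^+ 2)); first by rewrite expf_neq0 // gt_eqF.
rewrite cosD.
set r := dist p u; set d := dist u v; set s := dist q v.
have -> : d ^+ 2 * (d ^+ 2 + r ^+ 2 + s ^+ 2 - 2 * d * r * cos (angle_rad p u v)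
  - 2 * d * s * cos (angle_rad u v q) + 2 * r * s * (cos (angle_rad p u v) *
  cos (angle_rad u v q) - sin (angle_rad p u v) * sin (angle_rad u v q)))
  = d ^+ 2 * (d ^+ 2 + r ^+ 2 + s ^+ 2)
    - 2 * d ^+ 2 * (cos (angle_rad p u v) * (r * d))
    - 2 * d ^+ 2 * (cos (angle_rad u v q) * (d * s))
    + 2 * (cos (angle_rad p u v) * (r * d) * (cos (angle_rad u v q) * (d * s))
           - sin (angle_rad p u v) * (r * d) * (sin (angle_rad u v q) * (d * s))).
  by ring.
have ca : cos (angle_rad p u v) * (r * d) = dot (vsub p u) (vsub v u).
  by rewrite /d dist_sym cos_angle_rad.
have sa : sin (angle_rad p u v) * (r * d) = `|cross u p v|.
  by rewrite /d dist_sym sin_angle_rad.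
rewrite ca sa cos_angle_rad sin_angle_rad sines /r /d /s !sqr_dist.
clear -R; case: u v p q => [u1 u2] [v1 v2] [p1 p2] [q1 q2].
by rewrite /dot /vsub /cross /=; ring.
Qed.

Lemma angle_rad_sum_ge_5pi6 u v p q : same_side u v p q ->
  dist p u <= dist p v -> dist u v <= dist p v ->
  dist u v <= dist u q -> dist q v <= dist u q ->
  dist u v <= dist p q -> dist p u <= dist p q -> dist q v <= dist p q ->
  5 * pi / 6 <= angle_rad p u v + angle_rad u v q.
Proof.
move=> side pu_pv uv_pv uv_uq qv_uq uv_pq pu_pq qv_pq.
have [uv_gt0 pu_gt0 qv_gt0] := same_side_dist_gt0 side.
have vu_gt0 : 0 < dist v u by rewrite dist_sym.
apply: (angle_sum_ge_5pi6 uv_gt0 pu_gt0 qv_gt0 _ _ _ _ (sqr_dist_same_side side)) => //.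
- by apply: angle_rad_ge_pi3; rewrite // [dist v u]dist_sym.
- exact: angle_rad_ge_pi3.
- by rewrite [dist u v]dist_sym; apply: cos_angle_rad_le; rewrite // [dist v u]dist_sym.
- by rewrite angle_radC; apply: cos_angle_rad_le; rewrite // [dist q u]dist_sym.
Qed.

End PlaneGeometry.

Section Graphs.
Variable n : nat.
Implicit Types (G : rel 'I_n) (a b x y : 'I_n).

Definition edge_rel a b : rel 'I_n :=
  fun i j => ((i == a) && (j == b)) || ((i == b) && (j == a)).

Definition add_edge G a b : rel 'I_n := fun i j => G i j || edge_rel a b i j.

Definition num_edges G := #|[set e : 'I_n * 'I_n | G e.1 e.2]|.

Lemma remove_edgeE G a b x y :
  remove_edge G a b x y = G x y && ~~ edge_rel a b x y.
Proof. by []. Qed.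

Lemma edge_relC a b : edge_rel a b =2 edge_rel b a.
Proof. by move=> i j; rewrite /edge_rel orbC. Qed.

Lemma edge_rel_sym a b : symmetric (edge_rel a b).
Proof. by move=> i j; rewrite /edge_rel orbC andbC [(j == b) && _]andbC. Qed.

Lemma remove_edge_sym G a b : symmetric G -> symmetric (remove_edge G a b).
Proof. by move=> G_sym i j; rewrite !remove_edgeE G_sym edge_rel_sym. Qed.

Lemma simple_remove_edge G a b : simple_graph G -> simple_graph (remove_edge G a b).
Proof.
case=> G_sym G_irr; split; first exact: remove_edge_sym.
by move=> i; rewrite remove_edgeE (negbTE (G_irr i)).
Qed.

Lemma remove_edge_keep G a b x y : G x y ->
  (x != a) && (x != b) || (y != a) && (y != b) -> remove_edge G a b x y.
Proof.
move=> Gxy; rewrite remove_edgeE Gxy /edge_rel.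
by case/orP=> /andP[/negbTE-> /negbTE->]; rewrite ?andbF.
Qed.

Lemma connect_remove_edge G a b x y : symmetric G ->
  connect (remove_edge G a b) a b -> connect G x y -> connect (remove_edge G a b) x y.
Proof.
move=> G_sym ab_conn; apply: connect_sub => i j Gij.
have [ab_ij|] := boolP (edge_rel a b i j); last first.
  by move=> not_ab; apply: connect1; rewrite remove_edgeE Gij.
have sym_conn := sym_connect_sym (remove_edge_sym a b G_sym).
by case/orP: ab_ij => /andP[/eqP-> /eqP->]; rewrite // sym_conn.
Qed.

Lemma num_edges_remove_edge G a b :
  G a b -> (num_edges (remove_edge G a b) < num_edges G)%N.
Proof.
move=> Gab; apply: proper_card; apply/fintype.properP; split.
  by apply/fintype.subsetP => -[i j]; rewrite !inE remove_edgeE => /andP[].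
by exists (a, b); rewrite !inE //= remove_edgeE /edge_rel !eqxx andbF.
Qed.

Lemma spanning_subtree G : simple_graph G -> connected_graph G ->
  exists2 T, spanning_tree T & subrel T G.
Proof.
have [k] := ubnP (num_edges G); elim: k G => // k IH G size_G G_simple G_conn.
have [G_acyclic|] :=
  boolP [forall a, forall b, G a b ==> ~~ connect (remove_edge G a b) a b].
  exists G => //; split => // a b.
  by move/forallP/(_ a)/forallP/(_ b)/implyP: G_acyclic.
move/forallPn=> [a /forallPn[b]]; rewrite negb_imply negbK => /andP[Gab ab_conn].
have [|||T T_tree T_sub] := IH (remove_edge G a b).
- by rewrite -ltnS (leq_trans _ size_G) // ltnS num_edges_remove_edge.
- exact: simple_remove_edge.
- by move=> i j; apply: connect_remove_edge => //; case: G_simple.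
by exists T => // i j /T_sub /andP[].
Qed.

End Graphs.

Section TreeLength.
Variables (R : realType) (n : nat) (P : 'I_n -> pt R).
Implicit Types (G H T : rel 'I_n) (a b p q u v x y z w : 'I_n).

Lemma tree_lengthE G : tree_length P G =
  \sum_(i : 'I_n) \sum_(j : 'I_n) (if (i < j)%N && G i j then dist (P i) (P j) else 0).
Proof. by apply: eq_bigr => i _; rewrite big_mkcond. Qed.

Lemma eq_tree_length G H : G =2 H -> tree_length P G = tree_length P H.
Proof.
by move=> GH; rewrite !tree_lengthE; apply: eq_bigr => i _; apply: eq_bigr => j _; rewrite GH.
Qed.

Lemma le_tree_length G H : subrel G H -> tree_length P G <= tree_length P H.
Proof.
move=> GH; rewrite !tree_lengthE; apply: ler_sum => i _; apply: ler_sum => j _.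
case: ifP => [/andP[-> /GH ->] //|_]; case: ifP => // _.
by rewrite sqrtr_ge0.
Qed.

Lemma tree_length_split G H : tree_length P G =
  tree_length P (fun i j => G i j && H i j) + tree_length P (fun i j => G i j && ~~ H i j).
Proof.
rewrite !tree_lengthE -big_split; apply: eq_bigr => i _; rewrite -big_split.
apply: eq_bigr => j _.
by case: (i < j)%N; case: (G i j); case: (H i j); rewrite /= ?addr0 ?add0r.
Qed.

Lemma tree_length_union G H : tree_length P (fun i j => G i j || H i j) <=
  tree_length P G + tree_length P H.
Proof.
rewrite !tree_lengthE -big_split; apply: ler_sum => i _; rewrite -big_split.
apply: ler_sum => j _; case: (i < j)%N; case: (G i j); case: (H i j);
  by rewrite /= ?addr0 ?add0r ?lerDl ?sqrtr_ge0.
Qed.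

Lemma tree_length_edge a b : a != b -> tree_length P (edge_rel a b) = dist (P a) (P b).
Proof.
wlog ab : a b / (a < b)%N.
  move=> tl_ab ab_neq; have [ab|ba|/val_inj ab_eq] := ltngtP a b; first exact: tl_ab.
  - rewrite (eq_tree_length (edge_relC a b)) tl_ab 1?eq_sym //.
    exact: dist_sym.
  - by rewrite ab_eq eqxx in ab_neq.
move=> _; rewrite tree_lengthE pair_bigA /= (bigD1 (a, b)) //= /edge_rel ab !eqxx /=.
rewrite big1 ?addr0 // => -[i j] /=; rewrite xpair_eqE => /negbTE not_ab.
case: ifP => //; rewrite not_ab /= => /andP[ij /andP[/eqP ib /eqP ja]].
by move: ij; rewrite ib ja => /(ltn_trans ab); rewrite ltnn.
Qed.

Lemma tree_length_remove_edge T a b : symmetric T -> T a b -> a != b ->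
  tree_length P T = tree_length P (remove_edge T a b) + dist (P a) (P b).
Proof.
move=> T_sym Tab ab_neq; rewrite (tree_length_split T (edge_rel a b)) addrC.
rewrite (@eq_tree_length (fun i j => T i j && edge_rel a b i j) (edge_rel a b))
  ?tree_length_edge // => i j.
apply/andP/idP => [[]//|ab_ij]; split=> //.
by case/orP: ab_ij => /andP[/eqP-> /eqP->]; rewrite // T_sym.
Qed.

Lemma tree_length_add_edge G a b : a != b ->
  tree_length P (add_edge G a b) <= tree_length P G + dist (P a) (P b).
Proof. by move=> ab_neq; rewrite -tree_length_edge //; apply: tree_length_union. Qed.

Lemma emst_exchange T x y z w : EMST P T -> T x y ->
  connect (remove_edge T x y) x z -> connect (remove_edge T x y) y w ->
  dist (P x) (P y) <= dist (P z) (P w).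
Proof.
(* Swapping the edge xy for zw keeps the graph connected, and a spanning tree
   inside it is no longer than len T - |xy| + |zw|. *)
move=> [[[T_sym T_irr] T_conn T_acyc] T_min] Txy xz yw.
set G := remove_edge T x y.
have G_sym : symmetric G := remove_edge_sym x y T_sym.
have xy_neq : x != y by apply: contraTneq Txy => ->; exact: T_irr.
have zw_neq : z != w.
  apply: contraNneq (T_acyc x y Txy) => zw; apply: connect_trans xz _.
  by rewrite zw (sym_connect_sym G_sym).
set G' := add_edge G z w.
have G'_sym : symmetric G' by move=> i j; rewrite /G' /add_edge G_sym edge_rel_sym.
have G'_simple : simple_graph G'.
  split=> // i; rewrite /G' /add_edge /G remove_edgeE (negbTE (T_irr i)) /=.
  by apply: contra zw_neq => /orP[] /andP[/eqP<- /eqP<-].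
have G_G' i j : connect G i j -> connect G' i j.
  by apply: connect_sub => k l Gkl; apply: connect1; rewrite /G' /add_edge Gkl.
have zw_edge : G' z w by rewrite /G' /add_edge /edge_rel !eqxx /= orbT.
have xy_conn : connect G' x y.
  apply: connect_trans (G_G' _ _ xz) (connect_trans (connect1 zw_edge) _).
  by rewrite (sym_connect_sym G'_sym); apply: G_G'.
have G'_conn : connected_graph G'.
  move=> i j; apply: connect_sub (T_conn i j) => k l Tkl.
  have [xy_kl|not_xy] := boolP (edge_rel x y k l); last first.
    by apply: connect1; rewrite /G' /add_edge /G remove_edgeE Tkl not_xy.
  by case/orP: xy_kl => /andP[/eqP-> /eqP->]; rewrite // (sym_connect_sym G'_sym).
have [T' T'_tree T'_sub] := spanning_subtree G'_simple G'_conn.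
have := T_min T' T'_tree; rewrite (tree_length_remove_edge T_sym Txy xy_neq) -/G.
have := le_tree_length T'_sub; have := tree_length_add_edge G zw_neq.
lra.
Qed.

Lemma emst_end_edge T p u v q : EMST P T -> T p u -> T u v -> T v q -> p != v ->
  dist (P p) (P u) <= dist (P p) (P v) /\ dist (P p) (P u) <= dist (P p) (P q).
Proof.
move=> emst Tpu Tuv Tvq pv; have [[[_ T_irr] _ _] _] := emst.
have vu : v != u by apply: contraTneq Tuv => ->; exact: T_irr.
have keep_uv : remove_edge T p u u v.
  by apply: remove_edge_keep; rewrite // (eq_sym v p) pv vu orbT.
have keep_vq : remove_edge T p u v q.
  by apply: remove_edge_keep; rewrite // (eq_sym v p) pv vu.
split; apply: (emst_exchange emst Tpu (connect0 _ p)); first exact: connect1.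
exact: connect_trans (connect1 keep_uv) (connect1 keep_vq).
Qed.

Lemma emst_middle_edge T p u v q :
  EMST P T -> T p u -> T u v -> T v q -> p != v -> q != u ->
  [/\ dist (P u) (P v) <= dist (P p) (P v), dist (P u) (P v) <= dist (P u) (P q)
    & dist (P u) (P v) <= dist (P p) (P q)].
Proof.
move=> emst Tpu Tuv Tvq pv qu; have [[[T_sym T_irr] _ _] _] := emst.
have pu : p != u by apply: contraTneq Tpu => ->; exact: T_irr.
have qv : q != v by apply: contraTneq Tvq => ->; exact: T_irr.
have keep_up : remove_edge T u v u p.
  by apply: remove_edge_keep; [rewrite (T_sym u p) | rewrite pu pv orbT].
have keep_vq : remove_edge T u v v q by apply: remove_edge_keep; rewrite // qu qv orbT.
split.
- exact: emst_exchange emst Tuv (connect1 keep_up) (connect0 _ v).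
- exact: emst_exchange emst Tuv (connect0 _ u) (connect1 keep_vq).
- exact: emst_exchange emst Tuv (connect1 keep_up) (connect1 keep_vq).
Qed.

End TreeLength.

Theorem corollary1 (R : realType) (n : nat) (P : 'I_n -> pt R) (T : rel 'I_n)
  (p u v q : 'I_n) :
  injective P -> EMST P T ->
  T p u -> T u v -> T v q ->
  same_side (P u) (P v) (P p) (P q) ->
  150 <= angle_deg (P p) (P u) (P v) + angle_deg (P u) (P v) (P q).
Proof.
move=> _ emst Tpu Tuv Tvq side; have [[[T_sym _] _ _] _] := emst.
have [pv qu] : p != v /\ q != u.
  have [pv qu] := same_side_neq side.
  by split; apply/eqP => e; [move: pv | move: qu]; rewrite e eqxx.
have [pu_pv pu_pq] := emst_end_edge emst Tpu Tuv Tvq pv.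
have [qv_uq qv_pq] :
    dist (P q) (P v) <= dist (P u) (P q) /\ dist (P q) (P v) <= dist (P p) (P q).
  rewrite ![dist (P _) (P q)]dist_sym.
  by apply: (emst_end_edge (T := T)) => //; rewrite T_sym.
have [uv_pv uv_uq uv_pq] := emst_middle_edge emst Tpu Tuv Tvq pv qu.
have sum_ge := angle_rad_sum_ge_5pi6 side pu_pv uv_pv uv_uq qv_uq uv_pq pu_pq qv_pq.
have pi_gt0 := @pi_gt0 R.
rewrite /angle_deg -!mulrDl ler_pdivlMr //; lra.
Qed.
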